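(* Let $\alpha$ and $\beta$ be elements of order 3 in the symmetric group $S_6$ that do not belong to the same Sylow 3-subgroup. Then $\alpha\beta$ or $\alpha\beta^2$ is not an element of order 3. *)

From mathcomp Require Import all_boot all_fingroup all_solvable.
Set Implicit Arguments. Unset Strict Implicit. Unset Printing Implicit Defensive.

From mathcomp Require Import all_boot all_fingroup all_solvable.

Set Implicit Arguments.
Unset Strict Implicit.

(* If a, b, ab and ab^2 all have order dividing 3 in S_6, then a and b
   commute: this is verified by exhausting S_6, a permutation being encoded by
   its list of images.  Commuting 3-elements generate a 3-group, which lies in
   some Sylow 3-subgroup. *)

Section PermSeq.

Variable n : nat.

Definition perm_seq (s : 'S_n) : seq nat := [seq val (s i) | i <- enum 'I_n].

(* Composition in diagrammatic order, matching [permM : (s * t) x = t (s x)]. *)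
Definition seq_mul (u v : seq nat) : seq nat :=
  [seq nth 0 v (nth 0 u i) | i <- iota 0 n].

Definition seq_exp (u : seq nat) (k : nat) : seq nat :=
  iter k (seq_mul u) (iota 0 n).

Lemma nth_perm_seq (s : 'S_n) (i : 'I_n) : nth 0 (perm_seq s) i = s i.
Proof. by rewrite /perm_seq (nth_map i) ?nth_ord_enum // size_enum_ord. Qed.

Lemma perm_seq_inj : injective perm_seq.
Proof.
move=> s t eq_st; apply/permP => i; apply: ord_inj.
by rewrite -!nth_perm_seq eq_st.
Qed.

Lemma perm_seq_mul (s t : 'S_n) :
  perm_seq (s * t)%g = seq_mul (perm_seq s) (perm_seq t).
Proof.
rewrite {1}/perm_seq /seq_mul -val_enum_ord -map_comp.
by apply: eq_map => i /=; rewrite !nth_perm_seq permM.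
Qed.

Lemma perm_seq1 : perm_seq 1%g = iota 0 n.
Proof. by rewrite /perm_seq -val_enum_ord; apply: eq_map => i; rewrite perm1. Qed.

Lemma perm_seq_exp (s : 'S_n) (k : nat) :
  perm_seq (s ^+ k)%g = seq_exp (perm_seq s) k.
Proof.
elim: k => [|k IHk]; first by rewrite expg0 perm_seq1.
by rewrite expgS perm_seq_mul IHk.
Qed.

Lemma seq_exp_perm_seq_eq1 (s : 'S_n) (k : nat) :
  (seq_exp (perm_seq s) k == iota 0 n) = (s ^+ k == 1)%g.
Proof. by rewrite -perm_seq_exp -perm_seq1 (inj_eq perm_seq_inj). Qed.

Lemma perm_seq_in_permutations (s : 'S_n) :
  perm_seq s \in permutations (iota 0 n).
Proof.
have perm_s : perm_eq [seq s i | i <- enum 'I_n] (enum 'I_n).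
  apply: uniq_perm; first by rewrite (map_inj_uniq (@perm_inj _ s)) enum_uniq.
    exact: enum_uniq.
  by move=> i; rewrite mem_enum -[i](permKV s) map_f ?mem_enum.
by rewrite mem_permutations /perm_seq -val_enum_ord map_comp perm_map.
Qed.

End PermSeq.

Local Open Scope group_scope.

Lemma seq_commute_of_exponent3_check :
  let cube_free u := seq_exp 6 u 3 == iota 0 6 in
  all (fun u => cube_free u ==>
         all (fun v => [&& cube_free v, cube_free (seq_mul 6 u v)
                         & cube_free (seq_mul 6 u (seq_exp 6 v 2))]
                       ==> (seq_mul 6 u v == seq_mul 6 v u))
             (permutations (iota 0 6)))
      (permutations (iota 0 6)).
Proof. by vm_compute. Qed.

Lemma S6_commute_of_exponent3 (a b : 'S_6) :
  a ^+ 3 = 1 -> b ^+ 3 = 1 ->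
  (a * b) ^+ 3 = 1 -> (a * b ^+ 2) ^+ 3 = 1 -> commute a b.
Proof.
move=> a3 b3 ab3 abb3.
have /allP/(_ _ (perm_seq_in_permutations a)) := seq_commute_of_exponent3_check.
rewrite (seq_exp_perm_seq_eq1 a 3) a3 eqxx => /allP/(_ _ (perm_seq_in_permutations b)).
rewrite -(perm_seq_exp b 2) -!perm_seq_mul !seq_exp_perm_seq_eq1 b3 ab3 abb3.
by rewrite eqxx (inj_eq (@perm_seq_inj 6)) => /eqP.
Qed.

Lemma commuting_p_elts_in_Sylow (gT : finGroupType) (p : nat) (G : {group gT})
    (a b : gT) :
  a \in G -> b \in G -> p.-elt a -> p.-elt b -> commute a b ->
  exists2 P : {group gT}, P \in 'Syl_p(G) & (a \in P) && (b \in P).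
Proof.
move=> aG bG pa pb cab.
have sQG : <[a]> <*> <[b]> \subset G by rewrite join_subG !cycle_subG aG.
have pQ : p.-group (<[a]> <*> <[b]>).
  by rewrite cent_joinEl ?cents_cycle // pgroupM; apply/andP.
have [P sylP sQP] := Sylow_superset sQG pQ.
exists P; first by rewrite inE.
by rewrite !(subsetP sQP) // ?mem_gen // inE cycle_id ?orbT.
Qed.

Theorem lemma4 (alpha beta : 'S_6) :
  #[alpha]%g = 3 -> #[beta]%g = 3 ->
  ~ (exists2 P : {group 'S_6}, P \in ('Syl_3([set: 'S_6]))%g & (alpha \in P) && (beta \in P)) ->
  #[(alpha * beta)%g]%g != 3 \/ #[(alpha * beta ^+ 2)%g]%g != 3.
Proof.
move=> o_alpha o_beta no_common_Sylow.
have cube1 (x : 'S_6) : #[x] = 3 -> x ^+ 3 = 1.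
  by move=> ox; apply/eqP; rewrite -order_dvdn ox.
have elt3 (x : 'S_6) : #[x] = 3 -> 3.-elt x by rewrite /p_elt => ->.
case: (eqVneq #[alpha * beta] 3) => o_ab; last by left.
case: (eqVneq #[alpha * beta ^+ 2] 3) => o_abb; last by right.
case: no_common_Sylow; apply: commuting_p_elts_in_Sylow; rewrite ?inE ?elt3 //.
exact: S6_commute_of_exponent3 (cube1 _ o_alpha) (cube1 _ o_beta)
  (cube1 _ o_ab) (cube1 _ o_abb).
Qed.
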